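(* Let $n\geq 0$ and $r\geq 0$ be integers and let $k\in\mathbf{Z}$. Then, as polynomials in $x$, \begin{align*} \tilde{A}_{n}^{(r,k)}(x)=\sum_{j=0}^{n}\Bigg\{\sum_{m=j}^{n}\sum_{l=0}^{m-j}(-1)^{m}\frac{\binom{m}{l}\binom{m-l}{j}}{\binom{m-l-j+r}{r}(l+1)^{k}}\, S_{1}(n,m)\,S_{2}(m-l-j+r,r)\Bigg\}(-x)^{j}. \end{align*}
   Context: For $k\in\mathbf{Z}$, the poly-logarithm factorial function is the formal power series $Lif_{k}(x)=\sum_{m=0}^{\infty}\frac{x^{m}}{m!(m+1)^{k}}$. For integers $r\geq 0$ and $k\in\mathbf{Z}$, the higher-order Cauchy of the second kind and poly-Cauchy of the second kind mixed type polynomials $\tilde{A}_{n}^{(r,k)}(x)$ are defined by the generating function \[\left(\frac{t}{(1+t)\log(1+t)}\right)^{r}Lif_{k}\left(-\log(1+t)\right)(1+t)^{x}=\sum_{n=0}^{\infty}\tilde{A}_{n}^{(r,k)}(x)\frac{t^{n}}{n!}.\] $S_{1}(n,m)$ denotes the (signed) Stirling numbers of the first kind, defined by $(x)_{n}=x(x-1)\cdots(x-n+1)=\sum_{m=0}^{n}S_{1}(n,m)x^{m}$, and $S_{2}(n,m)$ denotes the Stirling numbers of the second kind, defined by $\frac{(e^{x}-1)^{m}}{m!}=\sum_{l\geq m}S_{2}(l,m)\frac{x^{l}}{l!}$. *)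

From mathcomp Require Import all_boot all_order all_algebra.
Set Implicit Arguments. Unset Strict Implicit. Unset Printing Implicit Defensive.
Import Order.TTheory GRing.Theory Num.Theory.
Local Open Scope ring_scope.

Definition series (R : comRingType) := nat -> R.

Definition sone (R : comRingType) : series R := fun n => (n == 0%N)%:R.

Definition smul (R : comRingType) (f g : series R) : series R :=
  fun n => \sum_(i < n.+1) f i * g (n - i)%N.

Definition sexp (R : comRingType) (f : series R) (m : nat) : series R :=
  iter m (smul f) (sone R).

(* multiplicative inverse of a series with constant term 1:
   1/(1+h) = sum_j (-h)^j, h = f - 1 (only j <= n contribute to t^n) *)
Definition sinv (R : comRingType) (f : series R) : series R :=
  fun n => \sum_(j < n.+1) sexp (fun i => - (f i - sone R i)) j n.

(* composition F(g(t)) for a series g with zero constant term *)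
Definition scomp (R : comRingType) (F g : series R) : series R :=
  fun n => \sum_(m < n.+1) F m * sexp g m n.

Definition slift (f : series rat) : series {poly rat} := fun n => (f n)%:P.

Definition log1p : series rat :=
  fun m => if m is m'.+1 then (-1) ^+ m' / (m%:R) else 0.

Definition onept : series rat := fun n => (n <= 1)%N%:R.

(* (1+t) log(1+t) / t *)
Definition Qser : series rat := smul onept (fun m => log1p m.+1).

Definition Lif (k : int) : series rat :=
  fun m => ((m`!)%:R * ((m.+1)%:R) ^ k)^-1.

(* (1+t)^x = sum_n binom(x,n) t^n, x the polynomial variable *)
Definition binomx : series {poly rat} :=
  fun n => (\prod_(i < n) ('X - (i%:R)%:P)) * (((n`!)%:R : rat)^-1)%:P.

Definition genfun (r : nat) (k : int) : series {poly rat} :=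
  smul (smul (sexp (slift (sinv Qser)) r)
             (slift (scomp (Lif k) (fun m => - log1p m))))
       binomx.

Definition Atilde (n r : nat) (k : int) : {poly rat} := (n`!)%:R *: genfun r k n.

Definition Stirling1 (n m : nat) : int :=
  (\prod_(i < n) ('X - (i%:R)%:P) : {poly int})`_m.

Definition expm1 : series rat := fun n => if n == 0%N then 0 else ((n`!)%:R)^-1.

Definition Stirling2 (l m : nat) : rat :=
  (l`!)%:R * sexp expm1 m l / (m`!)%:R.

From mathcomp Require Import all_boot all_order all_algebra.
From mathcomp Require Import zify ring.
Import Order.TTheory GRing.Theory Num.Theory.
Local Open Scope ring_scope.

(* Write L = log(1+t). Since e^{-L} = 1/(1+t), we have (1+t)^x = e^{xL} and
   t/((1+t)L) = P(L) with P(u) = (1 - e^{-u})/u, so the generating function is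
   H(L) for H(u) = e^{xu} Lif_k(-u) P(u)^r.  The coefficient of t^n/n! in L^m is
   m! S1(n,m), and P(u)^r = sum_i (-1)^i r!/(i+r)! S2(i+r,r) u^i; extracting the
   coefficient of t^n in H(L) gives the formula.  Identities between formal
   power series are proved on their truncations modulo X^N, which are
   polynomials. *)

Lemma fact_neq0 {R : numDomainType} n : n`!%:R != 0 :> R.
Proof. by rewrite pnatr_eq0 -lt0n fact_gt0. Qed.

Lemma sum_triangle (V : nmodType) n (F : nat -> nat -> V) :
  \sum_(j < n.+1) \sum_(j <= m < n.+1) F j m = \sum_(m < n.+1) \sum_(j < m.+1) F j m.
Proof.
transitivity (\sum_(0 <= j < n.+1) \sum_(0 <= m < n.+1 | (j <= m)%N) F j m).
  by rewrite big_mkord; apply: eq_bigr => j _; apply: big_nat_widenl.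
rewrite (exchange_big_dep_nat xpredT) //= big_mkord; apply: eq_bigr => m _.
by rewrite big_mkord (big_ord_widen n.+1 (F^~ m)) ?ltn_ord.
Qed.

Section FormalSeries.
Context {R : comNzRingType}.
Implicit Types (f g F : series R) (p q s : {poly R}).

Definition eqmodX N p q := forall i, (i < N)%N -> p`_i = q`_i.

Lemma eqmodX_refl N p : eqmodX N p p. Proof. by []. Qed.

Lemma eqmodX_sym {N p q} : eqmodX N p q -> eqmodX N q p.
Proof. by move=> h i /h ->. Qed.

Lemma eqmodX_trans {N p q s} : eqmodX N p q -> eqmodX N q s -> eqmodX N p s.
Proof. by move=> h1 h2 i iN; rewrite h1 // h2. Qed.

Lemma eqmodXD {N p p' q q'} :
  eqmodX N p p' -> eqmodX N q q' -> eqmodX N (p + q) (p' + q').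
Proof. by move=> h1 h2 i iN; rewrite !coefD h1 // h2. Qed.

Lemma eqmodXN {N p p'} : eqmodX N p p' -> eqmodX N (- p) (- p').
Proof. by move=> h i iN; rewrite !coefN h. Qed.

Lemma eqmodXM {N p p' q q'} :
  eqmodX N p p' -> eqmodX N q q' -> eqmodX N (p * q) (p' * q').
Proof.
move=> h1 h2 i iN; rewrite !coefM; apply: eq_bigr => j _.
have hj := ltn_ord j; rewrite h1 ?h2 //; lia.
Qed.

Lemma eqmodXX {N p q} m : eqmodX N p q -> eqmodX N (p ^+ m) (q ^+ m).
Proof. by move=> h; elim: m => [|m IH]; rewrite ?expr0 // !exprS; apply: eqmodXM. Qed.

Lemma coef_expr_lt p m i : p`_0 = 0 -> (i < m)%N -> (p ^+ m)`_i = 0.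
Proof.
move=> p0 im; have -> : p = drop_poly 1 p * 'X.
  rewrite -{1}(poly_take_drop 1 p) [take_poly 1 p](_ : _ = 0) ?add0r //.
  by apply/polyP => -[|j]; rewrite coef_take_poly coef0 ?p0.
by rewrite exprMn mulrC coefXnM im.
Qed.

Lemma eqmodX_comp {N p q s} : s`_0 = 0 -> eqmodX N p q -> eqmodX N (p \Po s) (q \Po s).
Proof.
move=> s0 h i iN; apply/eqP; rewrite -subr_eq0 -coefB -comp_polyB comp_polyE.
rewrite coef_sum big1 // => j _; rewrite coefZ coefB.
case: (ltnP j N) => jN; first by rewrite h // subrr mul0r.
by rewrite coef_expr_lt ?mulr0 //; apply: leq_trans iN jN.
Qed.

Definition trunc N f : {poly R} := \poly_(i < N) f i.

Lemma coef_trunc N f i : (trunc N f)`_i = if (i < N)%N then f i else 0.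
Proof. exact: coef_poly. Qed.

Lemma coef_trunc_lt N f i : (i < N)%N -> (trunc N f)`_i = f i.
Proof. by move=> iN; rewrite coef_trunc iN. Qed.

Lemma eq_trunc {N f g} : f =1 g -> trunc N f = trunc N g.
Proof. by move=> fg; apply/polyP => i; rewrite !coef_trunc fg. Qed.

Lemma eqmodX_trunc N f g :
  (forall i, (i < N)%N -> f i = g i) -> eqmodX N (trunc N f) (trunc N g).
Proof. by move=> fg i iN; rewrite !coef_trunc_lt // fg. Qed.

Lemma series_truncP f g : (forall N, eqmodX N (trunc N f) (trunc N g)) -> f =1 g.
Proof. by move=> fg n; rewrite -(@coef_trunc_lt n.+1 f) // fg // coef_trunc_lt. Qed.

Lemma trunc_sone N : eqmodX N (trunc N (sone R)) 1.
Proof. by move=> i iN; rewrite coef_trunc_lt // coef1. Qed.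

Lemma trunc_smul N f g : eqmodX N (trunc N (smul f g)) (trunc N f * trunc N g).
Proof.
move=> i iN; rewrite coef_trunc_lt // coefM; apply: eq_bigr => j _.
have hj := ltn_ord j; rewrite !coef_trunc_lt //; lia.
Qed.

Lemma trunc_sexp N f m : eqmodX N (trunc N (sexp f m)) (trunc N f ^+ m).
Proof.
elim: m => [|m IH]; first exact: trunc_sone.
by rewrite exprS; apply: eqmodX_trans (trunc_smul _ _ _) (eqmodXM _ IH).
Qed.

Lemma sexp_lt f m i : f 0%N = 0 -> (i < m)%N -> sexp f m i = 0.
Proof.
move=> f0 im; rewrite -(@coef_trunc_lt i.+1 (sexp f m)) // trunc_sexp //.
by rewrite coef_expr_lt // coef_trunc_lt.
Qed.

Lemma trunc_scomp N F g :
  g 0%N = 0 -> eqmodX N (trunc N (scomp F g)) (trunc N F \Po trunc N g).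
Proof.
move=> g0 i iN; rewrite coef_trunc_lt // [trunc N F]poly_def rmorph_sum /= coef_sum.
under [RHS]eq_bigr => m _ do
  rewrite comp_polyZ rmorphXn /= comp_polyX coefZ -trunc_sexp ?coef_trunc_lt //.
rewrite /scomp -!(big_mkord xpredT (fun m => F m * sexp g m i)).
rewrite [RHS](@big_cat_nat _ _ _ i.+1) //= [X in _ + X]big1_seq ?addr0 //.
by move=> m /andP[_]; rewrite mem_index_iota => /andP[im _]; rewrite sexp_lt ?mulr0.
Qed.

Lemma smulC f g : smul f g =1 smul g f.
Proof.
apply: series_truncP => N; have := trunc_smul N g f; rewrite mulrC.
by move/eqmodX_sym; apply: eqmodX_trans (trunc_smul _ _ _).
Qed.

Lemma sinv_unique f g : f 0%N = 1 -> smul f g =1 sone R -> sinv f =1 g.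
Proof.
move=> f0 fg; apply: series_truncP => N.
pose h i := - (f i - sone R i).
have h0 : h 0%N = 0 by rewrite /h f0 subrr oppr0.
set H := trunc N h; set G := \sum_(j < N) H ^+ j.
have sinvG : eqmodX N (trunc N (sinv f)) G.
  have -> : trunc N (sinv f) = trunc N (scomp (fun=> 1) h).
    by apply: eq_trunc => n; apply: eq_bigr => j _; rewrite mul1r.
  apply: eqmodX_trans (trunc_scomp _ _ _ h0) _.
  rewrite [trunc N (fun=> 1)]poly_def rmorph_sum /=.
  under eq_bigr => j _ do rewrite comp_polyZ scale1r rmorphXn /= comp_polyX.
  exact: eqmodX_refl.
have fH : eqmodX N (trunc N f) (1 - H).
  move=> i iN; rewrite coefB !coef_trunc_lt // -(trunc_sone _ _ iN) coef_trunc_lt //.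
  by rewrite /h opprK addrC subrK.
have fg1 : eqmodX N (trunc N f * trunc N g) 1.
  apply: eqmodX_trans (eqmodX_sym (trunc_smul _ _ _)) _.
  by apply: eqmodX_trans (trunc_sone N); apply: eqmodX_trunc => i _; rewrite fg.
have HG1 : eqmodX N ((1 - H) * G) 1.
  rewrite /G -[1 - H]opprB mulNr -subrX1 opprB => i iN.
  by rewrite coefB coef_expr_lt ?subr0 ?coef_trunc_lt //; apply: leq_ltn_trans iN.
(* G = G (f g) = (G f) g = g modulo X^N *)
apply: eqmodX_trans sinvG _; rewrite -[G]mulr1.
apply: eqmodX_trans (eqmodXM (eqmodX_refl _ _) (eqmodX_sym fg1)) _.
rewrite mulrA -[trunc N g]mul1r mulrA mulr1.
apply: eqmodXM (eqmodX_refl _ _); rewrite mulrC.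
exact: eqmodX_trans (eqmodXM fH (eqmodX_refl _ _)) HG1.
Qed.

Lemma eq_smul f f' g g' : f =1 f' -> g =1 g' -> smul f g =1 smul f' g'.
Proof. by move=> ff' gg' n; apply: eq_bigr => i _; rewrite ff' gg'. Qed.

Lemma eq_sexp f g m : f =1 g -> sexp f m =1 sexp g m.
Proof. by move=> fg; elim: m => [|m IH] //= n; apply: eq_smul. Qed.

Lemma sexp_coef0 f m : sexp f m 0%N = f 0%N ^+ m.
Proof. by elim: m => [|m IH]; rewrite /= ?expr0 // /smul big_ord1 IH exprS. Qed.

Lemma sexp_scale (c : R) f m n : sexp (fun i => c * f i) m n = c ^+ m * sexp f m n.
Proof.
elim: m n => [|m IH] n /=; first by rewrite expr0 mul1r.
by rewrite /smul mulr_sumr; apply: eq_bigr => i _; rewrite IH exprS; ring.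
Qed.

Lemma sexp_dilate (c : R) f m n :
  sexp (fun i => c ^+ i * f i) m n = c ^+ n * sexp f m n.
Proof.
elim: m n => [|m IH] n /=.
  by rewrite /sone; case: n => [|n] /=; rewrite ?expr0 ?mul1r ?mulr0.
rewrite /smul mulr_sumr; apply: eq_bigr => i _; rewrite IH.
have -> : c ^+ n = c ^+ i * c ^+ (n - i) by rewrite -exprD subnKC // -ltnS.
ring.
Qed.

Definition sshift f : series R := fun n => if n is n'.+1 then f n' else 0.

Lemma sexp_sshift f m i : sexp (sshift f) m (i + m) = sexp f m i.
Proof.
set N := (i + m).+1.
have shiftX : eqmodX N (trunc N (sshift f)) ('X * trunc N f).
  move=> [|j] jN; rewrite coefXM coef_trunc_lt //=.
  by rewrite coef_trunc_lt //; apply: ltnW.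
rewrite -(@coef_trunc_lt N) // trunc_sexp // (eqmodXX m shiftX) //.
by rewrite exprMn coefXnM ltnNge leq_addl addnK -trunc_sexp ?coef_trunc_lt // /N; lia.
Qed.

End FormalSeries.

Section Lift.
Implicit Types f g F : series rat.

Lemma slift_smul f g : smul (slift f) (slift g) =1 slift (smul f g).
Proof.
by move=> n; rewrite /slift /smul rmorph_sum /=; apply: eq_bigr => i _; rewrite polyCM.
Qed.

Lemma slift_sexp f m : sexp (slift f) m =1 slift (sexp f m).
Proof.
elim: m => [|m IH] n /=; first by rewrite /slift /sone polyC_natr.
by rewrite -slift_smul; apply: eq_smul.
Qed.

Lemma slift_scomp F g : scomp (slift F) (slift g) =1 slift (scomp F g).
Proof.
move=> n; rewrite /slift /scomp rmorph_sum /=; apply: eq_bigr => i _.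
by rewrite slift_sexp polyCM.
Qed.

End Lift.

Definition falling n : {poly rat} := \prod_(i < n) ('X - i%:R%:P).

Definition s1 n m : rat := (Stirling1 n m)%:~R.

Lemma coef_falling n m : (falling n)`_m = s1 n m.
Proof.
rewrite /s1 /Stirling1 -(coef_map intr) map_prod_XsubC /=.
by under eq_bigr => i _ do rewrite rmorph_nat.
Qed.

Lemma s1_0 m : s1 0 m = (m == 0)%:R.
Proof. by rewrite -coef_falling /falling big_ord0 coef1. Qed.

Lemma s1S n m : s1 n.+1 m = (if m is m'.+1 then s1 n m' else 0) - s1 n m * n%:R.
Proof.
rewrite -!coef_falling /falling big_ord_recr /= mulrBr coefB coefMX coefMC.
by case: m => [|m]; rewrite /= -?coef_falling.
Qed.

Lemma s1_gt n m : (n < m)%N -> s1 n m = 0.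
Proof.
elim: n m => [|n IH] [|m] // nm; first by rewrite s1_0.
by rewrite s1S !IH ?mul0r ?subr0 // ltnW.
Qed.

Lemma log1pS_mul j : log1p j.+1 *+ j.+1 = (-1) ^+ j.
Proof. by rewrite /log1p -[_ *+ j.+1]mulr_natr divfK // pnatr_eq0. Qed.

Lemma log1p_deriv N : eqmodX N (('X + 1) * (trunc N.+1 log1p)^`()) 1.
Proof.
move=> [|j] jN; rewrite mulrDl mul1r coefD coefXM !coef_deriv coef1 !coef_trunc.
  by rewrite eqxx add0r (_ : (1 < N.+1)%N) // log1pS_mul.
have [lt1 lt2] : (j.+1 < N.+1)%N /\ (j.+2 < N.+1)%N by lia.
rewrite [j.+1 == 0%N]/= -[j.+1.-1.+1]/j.+1 lt1 lt2 !log1pS_mul.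
by rewrite exprS mulN1r addrN.
Qed.

Lemma sexp_log1p_rec n m :
  sexp log1p m.+1 n.+1 *+ n.+1 + sexp log1p m.+1 n *+ n = sexp log1p m n *+ m.+1.
Proof.
set P := trunc n.+2 log1p.
have coefP b a : (a < n.+2)%N -> sexp log1p b a = (P ^+ b)`_a.
  by move=> an; rewrite -trunc_sexp // coef_trunc_lt.
have chain : ('X + 1) * (P ^+ m.+1)^`() = ('X + 1) * P^`() * P ^+ m *+ m.+1.
  by rewrite deriv_exp /= mulrnAr !mulrA.
have := congr1 (fun p : {poly rat} => p`_n) chain.
rewrite coefMn (eqmodXM (log1p_deriv n.+1) (eqmodX_refl _ _)) // mul1r -coefP //.
move=> <-; rewrite mulrDl mul1r coefD coefXM !coef_deriv -!coefP //; last by lia.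
by case: (n) => [|k]; rewrite addrC ?mulr0n.
Qed.

Lemma sexp_log1p_Stirling1 n m : sexp log1p m n * n`!%:R = m`!%:R * s1 n m.
Proof.
elim: n m => [|n IH] m.
  by rewrite sexp_coef0 expr0n s1_0 mulr1; case: m => [|m]; rewrite ?mul1r ?mulr0.
case: m => [|m].
  have := IH 0%N; rewrite s1S /= /sone mul0r !mul1r => <-.
  by case: n {IH} => [|n]; rewrite ?mulr0 ?mul0r oppr0.
have rec : sexp log1p m.+1 n.+1 * n.+1%:R =
    sexp log1p m n * m.+1%:R - sexp log1p m.+1 n * n%:R.
  by rewrite !mulr_natr -sexp_log1p_rec addrK.
rewrite factS natrM mulrA rec mulrBl !(mulrAC _ _ n`!%:R) !IH s1S factS natrM.
ring.
Qed.

Definition expx : series {poly rat} := fun m => (m`!%:R^-1)%:P * 'X^m.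

Lemma binomx_exp_log : binomx =1 scomp expx (slift log1p).
Proof.
move=> n; have -> : scomp expx (slift log1p) n =
    \poly_(m < n.+1) (m`!%:R^-1 * sexp log1p m n).
  rewrite poly_def; apply: eq_bigr => m _.
  by rewrite slift_sexp /slift /expx mulrAC -polyCM mul_polyC.
apply/polyP => j; rewrite /binomx -/(falling n) coefMC coef_falling coef_poly.
case: ltnP => [_ | nj]; last by rewrite s1_gt ?mul0r.
apply: (mulIf (fact_neq0 n)).
by rewrite mulfVK ?fact_neq0 // -mulrA sexp_log1p_Stirling1 mulKf ?fact_neq0.
Qed.

Definition expN : series rat := fun m => (-1) ^+ m / m`!%:R.

Lemma scomp_expN_log1p : scomp expN log1p =1 fun n => (-1) ^+ n.
Proof.
(* Evaluate (1+t)^x = e^{xL} at x = -1. *)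
move=> n; have := congr1 (horner^~ (-1)) (binomx_exp_log n).
have prodN1 : \prod_(i < n) (-1 - i%:R) = (-1) ^+ n * n`!%:R :> rat.
  elim: n => [|n IH]; first by rewrite big_ord0 expr0 mulr1.
  by rewrite big_ord_recr /= IH factS natrM exprS -opprD addrC -natr1; ring.
rewrite /binomx hornerM hornerC horner_prod.
under eq_bigr => i _ do rewrite hornerXsubC.
rewrite prodN1 mulfK ?fact_neq0 // => ->.
rewrite horner_sum; apply: eq_bigr => m _.
by rewrite slift_sexp /slift /expx !hornerM !hornerC hornerXn /expN; ring.
Qed.

(* The series P(u) = (1 - e^{-u})/u. *)
Definition expN_quot : series rat := fun i => (-1) ^+ i / (i.+1)`!%:R.

Lemma Qser_coef0 : Qser 0 = 1.
Proof. by rewrite /Qser /smul big_ord1 /onept /log1p /= expr0 divr1. Qed.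

Lemma trunc_onept N : eqmodX N (trunc N onept) ('X + 1).
Proof. by move=> [|[|j]] jN; rewrite coef_trunc_lt // coefD coefX coef1. Qed.

Lemma onept_mul_sign : smul onept (fun n => (-1) ^+ n) =1 sone rat.
Proof.
move=> [|n]; first by rewrite /smul big_ord1 /onept /sone /= mulr1.
rewrite /smul big_ord_recl big_ord_recl big1 => [|i _]; last by rewrite /onept mul0r.
by rewrite /onept /sone /bump /= !mul1r addr0 subSS subn0 exprS mulN1r subn0 addNr.
Qed.

Lemma Qser_mul_expN_quot : smul Qser (scomp expN_quot log1p) =1 sone rat.
Proof.
move=> n; set M := n.+2.
set T := trunc M log1p; set Ld := trunc M (fun m => log1p m.+1).
set Em := trunc M expN; set P := trunc M expN_quot.
have L0 : log1p 0 = 0 by [].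
have T0 : T`_0 = 0 by rewrite coef_trunc_lt.
have QLd : eqmodX M (trunc M Qser) (('X + 1) * Ld).
  exact: eqmodX_trans (trunc_smul _ _ _) (eqmodXM (trunc_onept M) (eqmodX_refl _ _)).
have XLd : eqmodX M ('X * Ld) T.
  move=> [|j] jM; rewrite coefXM /=; first by rewrite T0.
  by rewrite !coef_trunc_lt // ltnW.
have XP : eqmodX M ('X * P) (1 - Em).
  move=> [|j] jM; rewrite coefXM coefB coef1 /= !coef_trunc_lt ?(ltnW jM) //.
  by rewrite sub0r /expN /expN_quot exprS mulN1r mulNr opprK.
have EmX : eqmodX M ((Em \Po T) * ('X + 1)) 1.
  apply: eqmodX_trans (eqmodXM (eqmodX_sym (trunc_scomp _ _ _ L0))
                                (eqmodX_sym (trunc_onept M))) _.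
  rewrite (eq_trunc scomp_expN_log1p).
  apply: eqmodX_trans (eqmodX_sym (trunc_smul _ _ _)) _.
  by rewrite (eq_trunc (smulC _ _)) (eq_trunc onept_mul_sign); apply: trunc_sone.
(* X Q P(L) = (1+X) L P(L) = (1+X) (1 - e^{-L}) = X modulo X^M *)
have key : eqmodX M ('X * (trunc M Qser * trunc M (scomp expN_quot log1p))) 'X.
  apply: eqmodX_trans (eqmodXM (eqmodX_refl _ 'X) (eqmodXM QLd (trunc_scomp _ _ _ L0))) _.
  rewrite -/T (_ : _ * _ = ('X + 1) * (('X * Ld) * (P \Po T))); last by ring.
  apply: eqmodX_trans (eqmodXM (eqmodX_refl _ _) (eqmodXM XLd (eqmodX_refl _ _))) _.
  rewrite -{1}[T]comp_polyX -comp_polyM.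
  apply: eqmodX_trans (eqmodXM (eqmodX_refl _ _) (eqmodX_comp T0 XP)) _.
  rewrite comp_polyB comp_polyC -[X in eqmodX _ _ X](addrK 1 'X).
  rewrite (_ : _ * _ = ('X + 1) - (Em \Po T) * ('X + 1)); last by ring.
  exact: eqmodXD (eqmodX_refl _ _) (eqmodXN EmX).
have := key n.+1 (ltnSn _).
by rewrite coefXM coefX -(trunc_smul _ _ _ _ (ltnW (ltnSn _))) coef_trunc_lt.
Qed.

Lemma sinv_Qser : sinv Qser =1 scomp expN_quot log1p.
Proof. exact: sinv_unique Qser_coef0 Qser_mul_expN_quot. Qed.

Lemma sexp_expN_quot r i : sexp expN_quot r i = (-1) ^+ i * sexp expm1 r (i + r).
Proof.
rewrite (@eq_sexp _ _ (fun i => (-1) ^+ i * (i.+1)`!%:R^-1)) // sexp_dilate.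
by rewrite (@eq_sexp _ expm1 (sshift (fun i => (i.+1)`!%:R^-1))) ?sexp_sshift // => -[].
Qed.

Definition LifN (k : int) : series rat := fun l => (-1) ^+ l * Lif k l.

Lemma scomp_Lif_opp k : scomp (Lif k) (fun m => - log1p m) =1 scomp (LifN k) log1p.
Proof.
move=> n; apply: eq_bigr => m _.
rewrite (@eq_sexp _ _ (fun i => -1 * log1p i)) => [|i]; last by rewrite mulN1r.
by rewrite sexp_scale /LifN mulrCA mulrA.
Qed.

Definition Hser r k : series {poly rat} :=
  smul expx (smul (slift (LifN k)) (sexp (slift expN_quot) r)).

Lemma genfun_scomp r k : genfun r k =1 scomp (Hser r k) (slift log1p).
Proof.
have L0 : slift log1p 0 = 0 by rewrite /slift polyC0.
have invQ : slift (sinv Qser) =1 scomp (slift expN_quot) (slift log1p).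
  by move=> m; rewrite slift_scomp /slift sinv_Qser.
have LifL : slift (scomp (Lif k) (fun m => - log1p m)) =1
             scomp (slift (LifN k)) (slift log1p).
  by move=> m; rewrite slift_scomp /slift scomp_Lif_opp.
apply: series_truncP => N; set T := trunc N (slift log1p).
set P := trunc N (slift expN_quot); set Lf := trunc N (slift (LifN k)).
set E := trunc N expx.
have lhs : eqmodX N (trunc N (genfun r k)) ((P ^+ r * Lf * E) \Po T).
  apply: eqmodX_trans (trunc_smul _ _ _) _.
  apply: eqmodX_trans (eqmodXM (trunc_smul _ _ _) (eqmodX_refl _ _)) _.
  apply: eqmodX_trans
    (eqmodXM (eqmodXM (trunc_sexp _ _ _) (eqmodX_refl _ _)) (eqmodX_refl _ _)) _.
  rewrite (eq_trunc invQ) (eq_trunc LifL) (eq_trunc binomx_exp_log) !rmorphM rmorphXn /=.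
  exact: eqmodXM (eqmodXM (eqmodXX r (trunc_scomp _ _ _ L0)) (trunc_scomp _ _ _ L0))
                 (trunc_scomp _ _ _ L0).
have rhs : eqmodX N (trunc N (scomp (Hser r k) (slift log1p))) ((E * (Lf * P ^+ r)) \Po T).
  have T0 : T`_0 = 0 by rewrite coef_trunc L0 if_same.
  apply: eqmodX_trans (trunc_scomp _ _ _ L0) (eqmodX_comp T0 _).
  apply: eqmodX_trans (trunc_smul _ _ _) (eqmodXM (eqmodX_refl _ _) _).
  exact: eqmodX_trans (trunc_smul _ _ _) (eqmodXM (eqmodX_refl _ _) (trunc_sexp _ _ _)).
by rewrite mulrC (mulrC Lf) in rhs; apply: eqmodX_trans lhs (eqmodX_sym rhs).
Qed.

Definition coefA r (k : int) m l j : rat :=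
  (-1) ^+ m * ('C(m, l) * 'C(m - l, j))%:R
    / (('C(m - l - j + r, r))%:R * ((l.+1)%:R) ^ k) * Stirling2 (m - l - j + r) r.

Lemma coefA_eq r k m l j : (j <= m)%N -> (l <= m - j)%N ->
  coefA r k m l j * (-1) ^+ j =
  m`!%:R / j`!%:R * LifN k l * sexp expN_quot r (m - j - l)%N.
Proof.
move=> jm lmj; rewrite -subnDA addnC subnDA; set i := (m - l - j)%N.
have sign : (-1) ^+ m * (-1) ^+ j = (-1) ^+ l * (-1) ^+ i :> rat.
  rewrite -!exprD (_ : m + j = l + i + j.*2)%N; last by rewrite -addnn; lia.
  by rewrite exprD -mul2n exprM sqrrN expr1n mulr1.
have fact_m : (m`!%:R : rat) = 'C(m, l)%:R * 'C(m - l, j)%:R * l`!%:R * j`!%:R * i`!%:R.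
  rewrite -!natrM -(@bin_fact m l) -?(@bin_fact (m - l) j); try lia.
  by rewrite -/i; congr (_%:R); ring.
have fact_ir : ((i + r)`!%:R : rat) = 'C(i + r, r)%:R * r`!%:R * i`!%:R.
  by rewrite -!natrM -(@bin_fact (i + r) r) ?leq_addl // addnK mulnA.
have binir : ('C(i + r, r)%:R : rat) != 0 by rewrite pnatr_eq0 -lt0n bin_gt0 leq_addl.
have powk : ((l.+1)%:R : rat) ^ k != 0 by rewrite expfz_neq0 // pnatr_eq0.
have regroup (a b c e d : rat) : a * b * c * e * d = a * d * (b * c * e) by ring.
rewrite /coefA regroup sign sexp_expN_quot /LifN /Lif /Stirling2.
rewrite fact_m fact_ir natrM.
by field; rewrite -/i powk binir !fact_neq0.
Qed.

Lemma Hser_expand r k m : m`!%:R *: Hser r k m =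
  \sum_(j < m.+1) (\sum_(l < (m - j).+1) coefA r k m l j)%:P * (- 'X) ^+ j.
Proof.
rewrite /Hser /smul scaler_sumr; apply: eq_bigr => j _.
rewrite rmorph_sum big_distrr big_distrl scaler_sumr /=; apply: eq_bigr => l _.
have jm : (j <= m)%N by rewrite -ltnS.
have lmj : (l <= m - j)%N by rewrite -ltnS.
have signC : (-1) ^+ j = ((-1) ^+ j)%:P :> {poly rat} by rewrite polyC_exp polyCN.
rewrite [(- 'X : {poly rat}) ^+ j]exprNn signC [RHS]mulrA -polyCM coefA_eq //.
by rewrite slift_sexp /slift /expx -mul_polyC !polyCM; ring.
Qed.

Lemma Atilde_scomp n r k :
  Atilde n r k = \sum_(m < n.+1) s1 n m *: (m`!%:R *: Hser r k m).
Proof.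
rewrite /Atilde genfun_scomp /scomp scaler_sumr; apply: eq_bigr => m _.
rewrite slift_sexp /slift mulrC mul_polyC !scalerA.
by rewrite mulrC sexp_log1p_Stirling1 mulrC.
Qed.

Theorem theorem1 (n r : nat) (k : int) :
  Atilde n r k =
  \sum_(j < n.+1)
    (\sum_(j <= m < n.+1) \sum_(l < (m - j).+1)
        ((-1) ^+ m * ('C(m, l) * 'C(m - l, j))%:R
          / (('C(m - l - j + r, r))%:R * ((l.+1)%:R) ^ k)
          * (Stirling1 n m)%:~R * Stirling2 (m - l - j + r) r))%:P
    * (- 'X) ^+ j.
Proof.
rewrite Atilde_scomp; under eq_bigr => m _ do rewrite Hser_expand scaler_sumr.
rewrite -(@sum_triangle _ n (fun j m =>
  s1 n m *: ((\sum_(l < (m - j).+1) coefA r k m l j)%:P * (- 'X) ^+ j))).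
apply: eq_bigr => j _; rewrite rmorph_sum big_distrl /=; apply: eq_big_nat => m _.
rewrite scalerAl scale_polyC mulr_sumr; congr (_%:P * _); apply: eq_bigr => l _.
by rewrite /coefA /s1; ring.
Qed.
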